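(* Let $d\ge2$, $(S,\mathfrak n,\mathbf k)$ a complete regular local ring with $\mathbf k$ algebraically closed of characteristic not dividing $d$, $0\ne f\in\mathfrak n^2$, and $R^\sharp=S[[z]]/(f+z^d)$; assume $f+z^d$ is irreducible. Let $N$ be a maximal Cohen-Macaulay $R^\sharp$-module and $X\in\mathrm{MF}_S^d(f)$. Then $\mu_{R^\sharp}(N)=\operatorname{rank}_S(N)$ if and only if $N^\flat$ is reduced, and $\mu_{R^\sharp}(X^\sharp)=\operatorname{rank}_S(X^\sharp)$ if and only if $X$ is reduced.
   Context: $\mathrm{MF}_S^d(f)$ is the category of matrix factorizations of $f$ with $d$ factors: $X=(\phi_1:F_2\to F_1,\dots,\phi_d:F_1\to F_d)$ with $F_i$ finitely generated free $S$-modules of equal rank and $\phi_1\cdots\phi_d=f\cdot1_{F_1}$. $X$ is reduced if $\mathrm{Im}\,\phi_k\subseteq\mathfrak nF_k$ for all $k$. A maximal Cohen-Macaulay $R^\sharp$-module is a finitely generated $R^\sharp$-module free over $S$; $\mu_{R^\sharp}$ denotes minimal number of generators. Fix $\mu\in S$ with $\mu^d=-1$. For such $N$ with $\phi:N\to N$ multiplication by $z$, $N^\flat=(\mu\phi,\dots,\mu\phi)$. For $X=(\phi_1,\dots,\phi_d)$, $X^\sharp$ is the $S$-module $F_d\oplus\cdots\oplus F_1$ with $z\cdot(x_d,x_{d-1},\dots,x_1)=(\mu^{-1}\phi_d(x_1),\mu^{-1}\phi_{d-1}(x_d),\dots,\mu^{-1}\phi_1(x_2))$. *)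

From HB Require Import structures.
From mathcomp Require Import all_boot all_order all_algebra.
Set Implicit Arguments. Unset Strict Implicit. Unset Printing Implicit Defensive.
Import Order.TTheory GRing.Theory Num.Theory.
Local Open Scope ring_scope.

Section CommAlg.
Variable S : comUnitRingType.

Definition is_ideal (I : S -> Prop) : Prop :=
  [/\ I 0, (forall x y, I x -> I y -> I (x + y)) & (forall a x, I x -> I (a * x))].

Definition is_prime (P : S -> Prop) : Prop :=
  [/\ is_ideal P, ~ P 1 & forall a b, P (a * b) -> P a \/ P b].

Definition ideal_generated_by (I : S -> Prop) (m : nat) (g : 'I_m -> S) : Prop :=
  forall x, I x <-> exists c : 'I_m -> S, x = \sum_(i < m) c i * g i.

Definition noetherian : Prop :=
  forall I, is_ideal I -> exists m (g : 'I_m -> S), ideal_generated_by I g.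

(** the set of non-units; S is local iff it is an ideal (the maximal ideal n) *)
Definition nn (x : S) : Prop := x \notin GRing.unit.

Definition local_ring : Prop := forall x y, nn x -> nn y -> nn (x + y).

Fixpoint mpow (k : nat) (x : S) : Prop :=
  match k with
  | 0 => True
  | k'.+1 => exists m (a b : 'I_m -> S),
      (forall i, nn (a i) /\ mpow k' (b i)) /\ x = \sum_(i < m) a i * b i
  end.

Definition prime_chain (k : nat) (P : 'I_k.+1 -> S -> Prop) : Prop :=
  (forall i, is_prime (P i)) /\
  forall (i : 'I_k.+1) (j : 'I_k.+1), j = i.+1 :> nat ->
     (forall x, P i x -> P j x) /\ exists x, P j x /\ ~ P i x.

Definition krull_dim (k : nat) : Prop :=
  (exists P : 'I_k.+1 -> S -> Prop, prime_chain P) /\ forall P : 'I_k.+2 -> S -> Prop, ~ prime_chain P.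

Definition edim (e : nat) : Prop :=
  (exists g : 'I_e -> S, ideal_generated_by nn g) /\
  forall e' (g : 'I_e' -> S), ideal_generated_by nn g -> (e <= e')%N.

Definition regular_local : Prop :=
  [/\ noetherian, local_ring & exists e, krull_dim e /\ edim e].

Definition complete : Prop :=
  (forall x : nat -> S, (forall j, mpow j (x j.+1 - x j)) ->
      exists y, forall j, mpow j (y - x j)) /\
  (forall y, (forall j, mpow j y) -> y = 0).

(** residue field k = S/n algebraically closed: every monic nonconstant
    polynomial has a root modulo n *)
Definition residue_alg_closed : Prop :=
  forall p : {poly S}, p \is monic -> (1 < size p)%N -> exists a, nn p.[a].

(** formal power series S[[z]] as coefficient sequences *)
Definition ps_mul (g h : nat -> S) : nat -> S :=
  fun k => \sum_(i < k.+1) g i * h (k - i)%N.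

Definition ps_one : nat -> S := fun k => if k == 0%N then 1 else 0.

Definition ps_unit (g : nat -> S) : Prop :=
  exists h, forall k, ps_mul g h k = ps_one k.

Definition ps_irreducible (F : nat -> S) : Prop :=
  [/\ exists k, F k != 0, ~ ps_unit F &
      forall g h, (forall k, ps_mul g h k = F k) -> ps_unit g \/ ps_unit h].

Definition f_plus_zd (f : S) (d : nat) : nat -> S :=
  fun k => (if k == 0%N then f else 0) + (if k == d then 1 else 0).

(** minimal number of generators of an S-module V with an S-linear
    endomorphism z (the R^#-module structure, z acting as z); the
    R^#-submodule generated by v_0..v_{m-1} is spanned over S by the
    z^k v_i (R^# = S[z]/(f+z^d) by Weierstrass preparation). *)
Definition generates (V : lmodType S) (z : V -> V) (m : nat) (v : 'I_m -> V) :=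
  forall y : V, exists K (c : 'I_m -> 'I_K -> S),
    y = \sum_(i < m) \sum_(k < K) c i k *: iter k z (v i).

Definition mu_is (V : lmodType S) (z : V -> V) (m : nat) : Prop :=
  (exists v : 'I_m -> V, generates z v) /\
  forall m' (v : 'I_m' -> V), generates z v -> (m <= m')%N.

(** matrix factorizations with d factors, all F_i = S^n (column vectors);
    X k represents phi_(k+1) : F_(k+2) -> F_(k+1) (indices mod d) *)
Definition is_MF (d : nat) (f : S) (n : nat) (X : 'I_d -> 'M[S]_n) : Prop :=
  \prod_(k < d) X k = f%:M.

Definition reduced (d n : nat) (X : 'I_d -> 'M[S]_n) : Prop :=
  forall (k : 'I_d) (x : 'cV[S]_n) (i : 'I_n), nn ((X k *m x) i 0).

Definition flat (d n : nat) (mu : S) (phi : 'M[S]_n) : 'I_d -> 'M[S]_n :=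
  fun _ => mu *: phi.

(** action of z on X^sharp = F_d + ... + F_1, an element being x with
    x k in F_(k+1): z x has F_(k+1)-component mu^-1 phi_(k+1)(x_(k+2)) *)
Definition sharp_z (d n : nat) (mu : S) (X : 'I_d -> 'M[S]_n)
  (x : {ffun 'I_d -> 'cV[S]_n}) : {ffun 'I_d -> 'cV[S]_n} :=
  [ffun k => mu^-1 *: (X k *m x (ordS k))].

End CommAlg.

From HB Require Import structures.
From mathcomp Require Import all_boot all_order all_algebra.
From mathcomp Require Import zify.
Set Implicit Arguments.
Unset Strict Implicit.
Unset Printing Implicit Defensive.
Import GRing.Theory.
Local Open Scope ring_scope.

(* Both equivalences are instances of one Nakayama-type statement about a free
   S-module V of rank N with an endomorphism z, S being local.  If z V lies in
   nV, then modulo n the R#-submodule generated by v_1, ..., v_m is just their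
   S-span, so the coordinate matrix of the v_i has a right inverse modulo n and
   a determinant argument forces m >= N.  If instead z b_j has a unit
   coordinate along another basis vector b_w, then b_w lies in the S-span of
   z b_j and the remaining basis vectors, so N - 1 generators suffice.  For
   N^flat a unit entry of phi can always be found off the diagonal: were phi
   diagonal modulo n, phi^d = -f would be congruent to diag (phi_ii^d) with
   f in n.  For X^sharp, z maps F_(k+2) to F_(k+1), a different summand since
   d >= 2. *)

Section MaximalIdeal.
Variable S : comUnitRingType.
Implicit Types a x y : S.

Lemma nn0 : nn (0 : S).
Proof. by rewrite /nn unitr0. Qed.

Lemma nnMl a x : nn x -> nn (a * x).
Proof. by rewrite /nn unitrM => /negbTE ->; rewrite andbF. Qed.

Lemma nnMr a x : nn x -> nn (x * a).
Proof. by rewrite mulrC; apply: nnMl. Qed.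

Lemma nnN x : nn x -> nn (- x).
Proof. by rewrite /nn unitrN. Qed.

Hypothesis S_local : local_ring S.

Lemma nnB x y : nn x -> nn y -> nn (x - y).
Proof. by move=> nx ny; apply: S_local => //; apply: nnN. Qed.

Lemma nn_sum (I : Type) (r : seq I) (P : pred I) (F : I -> S) :
  (forall i, P i -> nn (F i)) -> nn (\sum_(i <- r | P i) F i).
Proof. by move=> nF; apply: big_ind => //; exact: nn0. Qed.

Lemma nn_subM x1 x2 y1 y2 :
  nn (x1 - x2) -> nn (y1 - y2) -> nn (x1 * y1 - x2 * y2).
Proof.
move=> nx ny; have -> : x1 * y1 - x2 * y2 = (x1 - x2) * y1 + x2 * (y1 - y2).
  by rewrite mulrBl mulrBr addrA subrK.
by apply: S_local; [apply: nnMr | apply: nnMl].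
Qed.

Lemma nn_subr1_unit x : nn (x - 1) -> x \is a GRing.unit.
Proof.
move=> nx; apply: contraT => nnx; have := S_local nnx (nnN nx).
by rewrite opprB addrCA subrr addr0 /nn unitr1.
Qed.

Lemma mpowS_nn k x : mpow k.+1 x -> nn x.
Proof. by case=> m [a [b [ab ->]]]; apply: nn_sum => i _; apply: nnMr; case: (ab i). Qed.

End MaximalIdeal.

Lemma mulmx_unit_leq (S : comUnitRingType) N m
    (A : 'M[S]_(N, m)) (B : 'M[S]_(m, N)) :
  A *m B \in unitmx -> (N <= m)%N.
Proof.
rewrite leqNgt unitmxE; apply: contraL => lt_mN.
have [k eN] : exists k, N = (m + k.+1)%N by exists (N - m.+1)%N; lia.
subst N.
have -> : A *m B = row_mx A (0 : 'M_(m + k.+1, k.+1)) *m col_mx B 0.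
  by rewrite mul_row_col mul0mx addr0.
rewrite det_mulmx (expand_det_col _ (rshift m ord0)) big1 ?mul0r ?unitr0 // => i _.
by rewrite row_mxEr mxE mul0r.
Qed.

Section MatricesModuloMaximalIdeal.
Variable S : comUnitRingType.
Hypothesis S_local : local_ring S.

Lemma nn_det_sub n (A B : 'M[S]_n) :
  (forall i j, nn (A i j - B i j)) -> nn (\det A - \det B).
Proof.
move=> nAB; rewrite /determinant -sumrB; apply: nn_sum => // s _.
rewrite -mulrBr; apply: nnMl.
apply: (big_ind2 (fun x y => nn (x - y))) => //; last exact: nn_subM.
by rewrite subrr; apply: nn0.
Qed.

Lemma unitmx_1_sub n (E : 'M[S]_n) : (forall i j, nn (E i j)) -> 1%:M - E \in unitmx.
Proof.
move=> nE; rewrite unitmxE; apply: nn_subr1_unit => //.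
rewrite -[X in _ - X](det1 S n); apply: nn_det_sub => i j.
by rewrite !mxE addrAC subrr add0r; apply: nnN.
Qed.

Definition nonunit_mx m n (A : 'M[S]_(m, n)) : bool :=
  [forall i, forall j, A i j \notin GRing.unit].

Lemma nonunit_mxP m n (A : 'M[S]_(m, n)) :
  reflect (forall i j, nn (A i j)) (nonunit_mx A).
Proof.
apply: (iffP forallP) => [nA i j | nA i]; first exact: (forallP (nA i)).
by apply/forallP => j; apply: nA.
Qed.

Lemma nonunit_mxPn m n (A : 'M[S]_(m, n)) :
  ~~ nonunit_mx A -> exists i j, A i j \is a GRing.unit.
Proof. by case/forallPn=> i /forallPn[j /negPn]; exists i, j. Qed.

Lemma nonunit_mxZ m n mu (A : 'M[S]_(m, n)) :
  mu \is a GRing.unit -> nonunit_mx (mu *: A) = nonunit_mx A.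
Proof.
move=> mu_unit; apply: eq_forallb => i; apply: eq_forallb => j.
by rewrite mxE unitrM mu_unit.
Qed.

Lemma nonunit_mulmxP m n (A : 'M[S]_(m, n)) :
  reflect (forall (x : 'cV[S]_n) i, nn ((A *m x) i 0)) (nonunit_mx A).
Proof.
apply: (iffP (nonunit_mxP A)) => [nA x i | nA i j].
  by rewrite mxE; apply: nn_sum => // j _; apply: nnMr.
by have := nA (delta_mx j 0) i; rewrite -colE mxE.
Qed.

Lemma reduced_nonunit_mx d n (X : 'I_d -> 'M[S]_n) :
  reduced X <-> forall k, nonunit_mx (X k).
Proof.
by split=> [red k | nX k]; [apply/nonunit_mulmxP; exact: red | apply/nonunit_mulmxP].
Qed.

Lemma exprn_diag_mod_nn n (phi : 'M[S]_n) :
    (forall r s, s != r -> nn (phi r s)) ->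
  forall k r, (forall s, s != r -> nn ((phi ^+ k) r s)) /\
              nn ((phi ^+ k) r r - phi r r ^+ k).
Proof.
move=> offdiag; elim=> [|k IHk] r.
  rewrite expr0; split=> [s sr|]; rewrite !mxE.
    by rewrite eq_sym (negbTE sr) mulr0n; apply: nn0.
  by rewrite eqxx mulr1n subrr; apply: nn0.
rewrite exprSr -mulmxE; split=> [s sr|]; rewrite mxE (bigD1 r) //=.
  apply: S_local; first by apply: nnMl; apply: offdiag.
  by apply: nn_sum => // t tr; apply: nnMr; apply: (IHk r).1.
rewrite exprSr addrAC -mulrBl; apply: S_local; first by apply: nnMr; apply: (IHk r).2.
by apply: nn_sum => // t tr; apply: nnMr; apply: (IHk r).1.
Qed.

Lemma offdiag_unit_entry d f n (phi : 'M[S]_n) :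
  (0 < d)%N -> nn f -> phi ^+ d = - f%:M -> ~~ nonunit_mx phi ->
  exists i j, j != i /\ phi i j \is a GRing.unit.
Proof.
move=> d_gt0 nn_f phi_d /nonunit_mxPn[i [j phi_ij]].
case: (boolP [exists r, exists s, (s != r) && (phi r s \is a GRing.unit)]).
  by case/existsP=> r /existsP[s /andP[sr u]]; exists r, s.
move/existsPn=> no_offdiag; exfalso.
have offdiag r s : s != r -> nn (phi r s).
  by move=> sr; apply/negP => u; move/existsPn: (no_offdiag r) => /(_ s); rewrite sr u.
have [ji | /offdiag] := eqVneq j i; last by rewrite /nn phi_ij.
subst j; have [_] := exprn_diag_mod_nn offdiag d i.
rewrite phi_d !mxE eqxx mulr1n => nn_diff.
have : nn (phi i i ^+ d) by rewrite -(subKr (- f) (_ ^+ d)); apply: nnB => //; apply: nnN.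
by move/negP; apply; rewrite unitrX_pos.
Qed.

End MatricesModuloMaximalIdeal.

Section FreeModuleGenerators.
Variables (S : comUnitRingType) (V : lmodType S) (z : V -> V) (N : nat).
Variables (coord : {linear V -> 'cV[S]_N}) (uncoord : 'cV[S]_N -> V).
Hypotheses (coordK : cancel coord uncoord) (uncoordK : cancel uncoord coord).

Local Notation b p := (uncoord (delta_mx p 0)).

Lemma coord_expand y : y = \sum_p coord y p 0 *: b p.
Proof.
apply: (can_inj coordK); rewrite linear_sum {1}(matrix_sum_delta (coord y)) /=.
by apply: eq_bigr => p _; rewrite big_ord1 linearZ /= uncoordK.
Qed.

Lemma generates_basis : generates z (fun p => b p).
Proof.
move=> y; exists 1%N, (fun p _ => coord y p 0).
by rewrite {1}(coord_expand y); apply: eq_bigr => p _; rewrite big_ord1.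
Qed.

Lemma generates_drop_basis (w j : 'I_N) :
  j != w -> coord (z (b j)) w 0 \is a GRing.unit ->
  generates z (fun q : 'I_N.-1 => b (lift w q)).
Proof.
move=> jw u_unit; rewrite eq_sym in jw; have [q0 j_q0 _] := unlift_some jw.
set u := coord (z (b j)) w 0; set t := fun q => coord (z (b j)) (lift w q) 0.
have b_w : b w = u^-1 *: (z (b j) - \sum_q t q *: b (lift w q)).
  have zbj := coord_expand (z (b j)); rewrite (bigD1_ord w) //= in zbj.
  by rewrite {1}zbj addrK scalerA mulVr // scale1r.
move=> y; pose yw := coord y w 0 * u^-1.
exists 2%N, (fun q k => if k == 0 :> nat then coord y (lift w q) 0 - yw * t q
                        else if q == q0 then yw else 0).
rewrite {1}(coord_expand y) (bigD1_ord w) //= b_w.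
under [RHS]eq_bigr => q _ do rewrite big_ord_recl big_ord1 /= scalerBl -scalerA.
rewrite big_split sumrB /= [X in _ = _ + X](bigD1 q0) //= eqxx.
rewrite [X in _ = _ + (_ + X)]big1 => [|q qq0]; last by rewrite (negbTE qq0) scale0r.
rewrite addr0 -j_q0 -scaler_sumr scalerA scalerBr.
by rewrite -/yw addrAC [RHS]addrC [RHS]addrA.
Qed.

Hypothesis S_local : local_ring S.

Lemma generates_size_ge :
    (forall y i, nn (coord (z y) i 0)) ->
  forall m (v : 'I_m -> V), generates z v -> (N <= m)%N.
Proof.
move=> z_nn m v gen_v; pose A := \matrix_(a < N, l < m) coord (v l) a 0.
have lift_basis p : exists r : 'cV[S]_m, forall a, nn ((delta_mx p 0 - A *m r) a 0).
  (* The k = 0 terms of the expansion of b p make up A r; the others lie in z V. *)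
  have [K [c Ep]] := gen_v (b p).
  exists (\col_l \sum_(k < K) (if k == 0 :> nat then c l k else 0)) => a.
  rewrite -[delta_mx p 0]uncoordK Ep linear_sum !mxE summxE.
  under [X in _ - X]eq_bigr => l _ do rewrite !mxE mulr_sumr.
  rewrite -sumrB; apply: nn_sum => // l _.
  rewrite linear_sum summxE -sumrB; apply: nn_sum => // -[[|k] lt_kK] _ /=.
    by rewrite linearZ mxE mulrC subrr; apply: nn0.
  by rewrite mulr0 subr0 linearZ mxE; apply: nnMl; apply: z_nn.
have [r Hr] := fin_all_exists lift_basis.
pose C := \matrix_(l < m, p < N) r p l 0.
apply: (@mulmx_unit_leq _ _ _ A C); rewrite -[A *m C](subKr 1%:M).
apply: unitmx_1_sub => // a p; rewrite !mxE.
have -> : \sum_l A a l * C l p = \sum_l A a l * r p l 0.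
  by apply: eq_bigr => l _; rewrite /C mxE.
by have := Hr p a; rewrite !mxE andbT.
Qed.

Lemma mu_is_rank_iff :
    (forall y i, nn (coord (z y) i 0)) \/
    (exists w j, j != w /\ coord (z (b j)) w 0 \is a GRing.unit) ->
  mu_is z N <-> forall y i, nn (coord (z y) i 0).
Proof.
case=> [z_nn | [w [j [jw u_unit]]]].
  split=> // _; split; last exact: generates_size_ge.
  by exists (fun p => b p); exact: generates_basis.
split=> [[_ min_N] | z_nn]; last by move/negP: (z_nn (b j) w).
have := min_N _ _ (generates_drop_basis jw u_unit); have := ltn_ord w; lia.
Qed.

End FreeModuleGenerators.

Lemma mu_is_flat_iff (S : comUnitRingType) d f mu n (phi : 'M[S]_n) :
  local_ring S -> (0 < d)%N -> nn f -> mu \is a GRing.unit -> phi ^+ d = - f%:M ->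
  mu_is (fun x : 'cV[S]_n => phi *m x) n <-> reduced (@flat S d n mu phi).
Proof.
move=> S_local d_gt0 nn_f mu_unit phi_d.
have reduced_flat : reduced (@flat S d n mu phi) <-> nonunit_mx phi.
  apply: (iff_trans (reduced_nonunit_mx S_local _)); rewrite /flat nonunit_mxZ //.
  by split=> [/(_ (Ordinal d_gt0)) | nphi _].
apply: (iff_trans (mu_is_rank_iff (coord := idfun) (uncoord := idfun) _ _ S_local _)) => //.
  case: (boolP (nonunit_mx phi)) => [/nonunit_mulmxP small | ]; first by left; exact: small.
  case/(offdiag_unit_entry S_local d_gt0 nn_f phi_d) => i [j [ji u]].
  by right; exists i, j; rewrite /= -colE mxE.
exact: iff_trans (rwP (nonunit_mulmxP S_local phi)) (iff_sym reduced_flat).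
Qed.

Lemma ordS_neq d (k : 'I_d) : (1 < d)%N -> ordS k != k.
Proof.
move=> d_gt1; apply/eqP => /(congr1 val) /=; have lt_kd := ltn_ord k.
case: (ltnP k.+1 d) => [lt_Skd | le_dSk]; first by rewrite modn_small //; lia.
have -> : k.+1 = d by lia.
by rewrite modnn; lia.
Qed.

Lemma mxvec_index_inj m n (i i' : 'I_m) (j j' : 'I_n) :
  mxvec_index i j = mxvec_index i' j' -> i = i' /\ j = j'.
Proof. by rewrite /mxvec_index => /cast_ord_inj /enum_rank_inj [-> ->]. Qed.

Section Stacking.
Variables (S : comUnitRingType) (d n : nat).

Definition stack_cV (x : {ffun 'I_d -> 'cV[S]_n}) : 'cV[S]_(d * n) :=
  (mxvec (\matrix_(k, l) x k l 0))^T.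

Definition unstack_cV (w : 'cV[S]_(d * n)) : {ffun 'I_d -> 'cV[S]_n} :=
  [ffun k => \col_l w (mxvec_index k l) 0].

Lemma stack_cVE x k l : stack_cV x (mxvec_index k l) 0 = x k l 0.
Proof. by rewrite mxE mxvecE mxE. Qed.

Lemma stack_cV_is_linear : linear stack_cV.
Proof.
move=> a x y; apply/matrixP => p i; rewrite (ord1 i); case/mxvec_indexP: p => k l.
by rewrite [RHS]mxE [X in _ = X + _]mxE !stack_cVE !ffunE !mxE.
Qed.

HB.instance Definition _ :=
  GRing.isLinear.Build S {ffun 'I_d -> 'cV[S]_n} 'cV[S]_(d * n) *:%R stack_cV
    stack_cV_is_linear.

Lemma stack_cVK : cancel stack_cV unstack_cV.
Proof.
by move=> x; apply/ffunP => k; apply/matrixP => l i; rewrite (ord1 i) ffunE mxE stack_cVE.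
Qed.

Lemma unstack_cVK : cancel unstack_cV stack_cV.
Proof.
move=> w; apply/matrixP => p i; rewrite (ord1 i); case/mxvec_indexP: p => k l.
by rewrite stack_cVE ffunE mxE.
Qed.

Lemma unstack_delta k j :
  unstack_cV (delta_mx (mxvec_index k j) 0) k = delta_mx j 0.
Proof.
apply/matrixP => l i; rewrite (ord1 i) ffunE !mxE /= !eqxx !andbT.
have [-> | ne_lj] := eqVneq l j; first by rewrite eqxx.
by case: eqP => // /mxvec_index_inj[_ eq_lj]; rewrite eq_lj eqxx in ne_lj.
Qed.

End Stacking.

Lemma stack_sharp_zE (S : comUnitRingType) d n mu (X : 'I_d -> 'M[S]_n) x k i :
  stack_cV (sharp_z mu X x) (mxvec_index k i) 0 = mu^-1 * (X k *m x (ordS k)) i 0.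
Proof. by rewrite stack_cVE ffunE mxE. Qed.

Lemma sharp_z_nn_iff (S : comUnitRingType) d n mu (X : 'I_d -> 'M[S]_n) :
    mu \is a GRing.unit ->
  (forall y p, nn (stack_cV (sharp_z mu X y) p 0)) <-> reduced X.
Proof.
move=> mu_unit; split=> [z_nn k x i | red y p].
  have := nnMl mu (z_nn [ffun => x] (mxvec_index k i)).
  by rewrite stack_sharp_zE ffunE mulrA mulrV // mul1r.
by case/mxvec_indexP: p => k i; rewrite stack_sharp_zE; apply: nnMl; apply: red.
Qed.

Lemma mu_is_sharp_iff (S : comUnitRingType) d mu n (X : 'I_d -> 'M[S]_n) :
  local_ring S -> (1 < d)%N -> mu \is a GRing.unit ->
  mu_is (sharp_z mu X) (d * n) <-> reduced X.
Proof.
move=> S_local d_gt1 mu_unit.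
apply: (iff_trans _ (sharp_z_nn_iff X mu_unit)).
apply: (mu_is_rank_iff (@stack_cVK S d n) (@unstack_cVK S d n) S_local).
case: (boolP [forall k, nonunit_mx (X k)]) => [/forallP red | ].
  by left; apply/(sharp_z_nn_iff X mu_unit)/(reduced_nonunit_mx S_local).
case/forallPn=> k /nonunit_mxPn[i [j X_kij]]; right.
exists (mxvec_index k i), (mxvec_index (ordS k) j); split.
  by apply: contra (ordS_neq k d_gt1) => /eqP/mxvec_index_inj[-> _].
by rewrite stack_sharp_zE unstack_delta -colE mxE unitrM unitrV mu_unit.
Qed.

Theorem lemma5p7 (S : comUnitRingType) (d : nat) (f mu : S) :
  (2 <= d)%N ->
  regular_local S -> complete S -> residue_alg_closed S ->
  (d%:R : S) \is a GRing.unit ->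
  f != 0 -> mpow 2 f ->
  ps_irreducible (f_plus_zd f d) ->
  mu ^+ d = -1 ->
  (forall (n : nat) (phi : 'M[S]_n), phi ^+ d = - f%:M ->
     (mu_is (fun x : 'cV[S]_n => phi *m x) n <-> reduced (@flat S d n mu phi)))
  /\
  (forall (n : nat) (X : 'I_d -> 'M[S]_n), is_MF f X ->
     (mu_is (sharp_z mu X) (d * n) <-> reduced X)).
Proof.
move=> d_ge2 [_ S_local _] _ _ _ _ f_n2 _ mu_d.
have d_gt0 : (0 < d)%N by apply: ltnW.
have nn_f : nn f := mpowS_nn S_local f_n2.
have mu_unit : mu \is a GRing.unit by rewrite -(unitrX_pos _ d_gt0) mu_d unitrN unitr1.
split=> [n phi phi_d | n X _].
  exact: (mu_is_flat_iff S_local d_gt0 nn_f mu_unit phi_d).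
exact: (mu_is_sharp_iff X S_local d_ge2 mu_unit).
Qed.
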